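(* Let $\Gamma$ be a finite group and let $\pi$ be a faithful irreducible unitary representation of $\Gamma$ on a finite-dimensional Hilbert space $\mathsf{H}$. Then there exists $\xi\in\mathsf{H}$ such that the matrix coefficient $g\mapsto\langle\xi,\pi(g)\xi\rangle$ separates the points of $\Gamma$. *)

From HB Require Import structures.
From mathcomp Require Import all_boot all_order all_algebra all_fingroup all_character.
Set Implicit Arguments. Unset Strict Implicit. Unset Printing Implicit Defensive.
Import GRing.Theory Num.Theory.
Local Open Scope ring_scope.

Definition hdot (C : numClosedFieldType) (n : nat) (u v : 'rV[C]_n) : C :=
  \sum_(i < n) (u 0 i)^* * v 0 i.

Definition unitary_mx (C : numClosedFieldType) (n : nat) (U : 'M[C]_n) : Prop :=
  U *m (map_mx Num.conj U)^T = 1%:M.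

From Stdlib Require Import Classical.
From mathcomp Require Import ring.
From HB Require Import structures.
From mathcomp Require Import all_boot all_order all_algebra all_fingroup all_character.
Import GRing.Theory Num.Theory.
Local Open Scope ring_scope.

(* For g <> h the matrix M = rG g^-1 - rG h^-1
   is nonzero, and by polarization the form u |-> <u, u M> of a nonzero matrix
   does not vanish identically.  On a line u + t v with t real this form is a
   quadratic polynomial in t, so adding a suitable multiple of v to a vector u
   on which finitely many such forms are nonzero keeps them nonzero and makes
   one more form nonzero; by induction one xi works for all pairs g <> h. *)

Lemma poly_nat_nonroot (R : numDomainType) (p : {poly R}) :
  p != 0 -> exists k : nat, ~~ root p k%:R.
Proof.
move=> p0.
suff /hasP [k _ hk] : has (fun k : nat => ~~ root p k%:R) (iota 0 (size p)).
  by exists k.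
apply: contraTT p0 => /hasPn rootsp.
set rs := [seq k%:R | k <- iota 0 (size p)] : seq R.
have rs_roots : all (root p) rs.
  by apply/allP => _ /mapP [k kp ->]; move: (rootsp k kp); rewrite negbK.
have rs_uniq : uniq rs.
  by rewrite map_inj_uniq ?iota_uniq // => a b /eqP; rewrite eqr_nat => /eqP.
apply/negP => /max_poly_roots /(_ rs_roots rs_uniq).
by rewrite size_map size_iota ltnn.
Qed.

Section HermitianForm.
Variables (C : numClosedFieldType) (n : nat).
Implicit Types (u v w : 'rV[C]_n) (M : 'M[C]_n).

Lemma hdotDl u v w : hdot (u + v) w = hdot u w + hdot v w.
Proof. by rewrite /hdot -big_split; apply: eq_bigr => i _; rewrite mxE rmorphD mulrDl. Qed.

Lemma hdotDr u v w : hdot u (v + w) = hdot u v + hdot u w.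
Proof. by rewrite /hdot -big_split; apply: eq_bigr => i _; rewrite mxE mulrDr. Qed.

Lemma hdotBr u v w : hdot u (v - w) = hdot u v - hdot u w.
Proof. by rewrite /hdot -sumrB; apply: eq_bigr => i _; rewrite !mxE mulrBr. Qed.

Lemma hdotZl a u v : hdot (a *: u) v = a^* * hdot u v.
Proof. by rewrite /hdot mulr_sumr; apply: eq_bigr => i _; rewrite mxE rmorphM mulrA. Qed.

Lemma hdotZr a u v : hdot u (a *: v) = a * hdot u v.
Proof. by rewrite /hdot mulr_sumr; apply: eq_bigr => i _; rewrite mxE mulrCA. Qed.

Lemma hdot_deltal a w : hdot (delta_mx 0 a) w = w 0 a.
Proof.
rewrite /hdot (bigD1 a) //= big1 ?addr0 => [|i ia].
  by rewrite mxE !eqxx conjC1 mul1r.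
by rewrite mxE (negbTE ia) andbF conjC0 mul0r.
Qed.

Definition hform M u := hdot u (u *m M).

Lemma hformBl M N u : hform (M - N) u = hform M u - hform N u.
Proof. by rewrite /hform mulmxBr hdotBr. Qed.

Lemma hdot_delta_mulmx M a b :
  hdot (delta_mx 0 a) (delta_mx 0 b *m M) = M b a.
Proof. by rewrite hdot_deltal -rowE mxE. Qed.

Lemma hformD M u v c : hform M (u + c *: v) =
  hform M u + c * hdot u (v *m M) + c^* * hdot v (u *m M) + c^* * c * hform M v.
Proof.
by rewrite /hform mulmxDl -scalemxAl hdotDl !hdotDr !hdotZl !hdotZr mulrA !addrA.
Qed.

Lemma hform_eq0 M : (forall u, hform M u = 0) -> M = 0.
Proof.
move=> hM0; apply/matrixP => i j; rewrite mxE.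
have diag0 a : M a a = 0 by rewrite -hdot_delta_mulmx; exact: hM0.
have polar c : c * M j i + c^* * M i j = 0.
  have := hM0 (delta_mx 0 i + c *: delta_mx 0 j).
  by rewrite hformD /hform !hdot_delta_mulmx !diag0 mulr0 !addr0 add0r.
have := polar 1; have := polar 'i.
rewrite conjC1 !mul1r conjCi mulNr -mulrBr => /eqP.
rewrite mulf_eq0 (negbTE (neq0Ci C)) subr_eq0 => /eqP ->.
by move/eqP; rewrite -mulr2n mulrn_eq0 => /eqP.
Qed.

Lemma hform_neq0 M : M != 0 -> exists u, hform M u != 0.
Proof.
move=> M0; apply: NNPP => hM0; case/eqP: M0; apply: hform_eq0 => u.
by apply/eqP/negPn/negP => hMu; apply: hM0; exists u.
Qed.

Definition hform_line M u v : {poly C} :=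
  (hform M u)%:P + (hdot u (v *m M) + hdot v (u *m M)) *: 'X + hform M v *: 'X^2.

Lemma hform_lineE M u v c :
  c^* = c -> (hform_line M u v).[c] = hform M (u + c *: v).
Proof.
move=> cR; rewrite hformD cR /hform_line !hornerE /=.
by rewrite mulrDl; ring.
Qed.

Lemma hform_line_neq0 M u v :
  (hform M u != 0) || (hform M v != 0) -> hform_line M u v != 0.
Proof.
have coef0E : (hform_line M u v)`_0 = hform M u.
  by rewrite /hform_line !coefD !coefZ coefC coefX coefXn !mulr0 !addr0.
have coef2E : (hform_line M u v)`_2 = hform M v.
  by rewrite /hform_line !coefD !coefZ coefC coefX coefXn mulr0 mulr1 !add0r.
by case/orP; apply: contraNneq => p0; rewrite -?coef0E -?coef2E p0 coef0.
Qed.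

Lemma hform_neq0_cons {Ms : seq 'M[C]_n} {A u v} :
  all (fun M => hform M u != 0) Ms -> hform A v != 0 ->
  exists k : nat, all (fun M => hform M (u + k%:R *: v) != 0) (A :: Ms).
Proof.
move=> hMsu hAv.
have : \prod_(M <- A :: Ms) hform_line M u v != 0.
  rewrite prodf_seq_neq0 /= hform_line_neq0 ?hAv ?orbT //.
  by apply/allP => M /(allP hMsu) hMu; rewrite hform_line_neq0 ?hMu.
case/poly_nat_nonroot => k; rewrite /root horner_prod prodf_seq_neq0 => hk.
by exists k; apply: sub_all hk => M; rewrite hform_lineE ?conjC_nat.
Qed.

Lemma hform_neq0_seq (Ms : seq 'M[C]_n) :
  all (fun M => M != 0) Ms -> exists u, all (fun M => hform M u != 0) Ms.
Proof.
elim: Ms => [|A Ms IHMs] /=; first by exists 0.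
case/andP => /hform_neq0 [v hAv] /IHMs [u hMsu].
by have [k hk] := hform_neq0_cons hMsu hAv; exists (u + k%:R *: v).
Qed.

End HermitianForm.

Theorem proposition6p1 (C : numClosedFieldType) (gT : finGroupType)
    (G : {group gT}) (n : nat) (rG : mx_representation C G n) :
  (forall g, g \in G -> unitary_mx (rG g)) ->
  mx_faithful rG ->
  mx_irreducible rG ->
  exists xi : 'rV[C]_n,
    {in G &, injective (fun g : gT => hdot xi (xi *m rG g^-1%g))}.
Proof.
move=> _ /mx_faithful_inj rG_inj _.
pose pairs := enum [pred x : gT * gT | [&& x.1 \in G, x.2 \in G & x.1 != x.2]].
pose Ms := [seq rG x.1^-1%g - rG x.2^-1%g | x <- pairs].
have [|xi hxi] := @hform_neq0_seq C n Ms.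
  apply/allP => M /mapP [[g h]]; rewrite mem_enum /= => /and3P [gG hG gh] ->.
  rewrite subr_eq0; apply: contra gh => /eqP /rG_inj.
  by rewrite !groupV => /(_ gG hG) /invg_inj ->.
exists xi => g h gG hG /= coef_gh; apply/eqP; apply: contraLR hxi => gh.
apply/allPn; exists (rG g^-1%g - rG h^-1%g).
  by apply/mapP; exists (g, h); rewrite // mem_enum inE /= gG hG.
by rewrite hformBl /hform coef_gh subrr eqxx.
Qed.
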